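(* For every unital algebra $A$ we have $\mathfrak{P}^{\mathrm{c}}(A)=\mathfrak{P}^{\mathrm{cu}}(A)$ and $\mathfrak{P}^{\mathrm{cr}}(A)=\mathfrak{P}^{\mathrm{cur}}(A)$.
   Context: Fix a field $\mathbb{F}$; algebras are associative $\mathbb{F}$-algebras. $\mathbf{A}_{\mathrm{c}},\mathbf{A}_{\mathrm{cr}}$: commutative, resp. commutative reduced (no nonzero nilpotents) algebras, not necessarily unital; $\mathbf{A}_{\mathrm{cu}},\mathbf{A}_{\mathrm{cur}}$: commutative, resp. commutative reduced unital algebras. For $*\in\{\mathrm{c},\mathrm{cr}\}$ and any algebra $A$, $\mathfrak{P}^*(A)$ is the set of $a\in A$ such that for every $C\in\mathbf{A}_*$ and every algebra morphism $\varphi:A\to C[x]$, $\varphi(a)\in C$ (is a constant polynomial). For $*\in\{\mathrm{cu},\mathrm{cur}\}$ and a unital algebra $A$, $\mathfrak{P}^*(A)$ is the set of $a\in A$ such that for every $C\in\mathbf{A}_*$ and every unit-preserving morphism $\varphi:A\to C[x]$, $\varphi(a)\in C$. (The paper defines these sets via universal pro-algebras $\mathfrak{M}^*_{A,\mathbb{F}[x]}$ and proves they coincide with the descriptions given.) *)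

From HB Require Import structures.
From mathcomp Require Import all_boot all_order all_algebra.
Set Implicit Arguments. Unset Strict Implicit. Unset Printing Implicit Defensive.
Import Order.TTheory GRing.Theory Num.Theory.
Local Open Scope ring_scope.

(* Associative F-algebras, NOT necessarily unital (MathComp's ring/algebra
   structures are all unital and nontrivial, so we use an explicit record on
   top of an F-vector space). *)
Record algebra (F : fieldType) := Algebra {
  alg_car :> lmodType F;
  amul : alg_car -> alg_car -> alg_car;
  amulA : forall x y z, amul x (amul y z) = amul (amul x y) z;
  amulDl : forall x y z, amul (x + y) z = amul x z + amul y z;
  amulDr : forall x y z, amul x (y + z) = amul x y + amul x z;
  amulZl : forall (k : F) x y, amul (k *: x) y = k *: amul x y;
  amulZr : forall (k : F) x y, amul x (k *: y) = k *: amul x y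
}.

(* Unital algebras (the unit may be 0, i.e. the zero algebra is allowed). *)
Record ualgebra (F : fieldType) := UAlgebra {
  ualg :> algebra F;
  aone : ualg;
  amul1l : forall x, amul aone x = x;
  amul1r : forall x, amul x aone = x
}.

Definition commutative_alg (F : fieldType) (C : algebra F) : Prop :=
  forall x y : C, amul x y = amul y x.

(* x^(n+1) *)
Definition apow (F : fieldType) (C : algebra F) (x : C) (n : nat) : C :=
  iter n (amul x) x.

Definition reduced_alg (F : fieldType) (C : algebra F) : Prop :=
  forall (x : C) (n : nat), apow x n = 0 -> x = 0.

(* An algebra morphism phi : A -> C[x], written through its coefficient maps:
   phi a = \sum_k (phik k a) x^k.  C[x] is the algebra of finitely supported
   coefficient sequences in C, with the Cauchy product. *)
Definition poly_morphism (F : fieldType) (A C : algebra F)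
    (phik : nat -> A -> C) : Prop :=
  [/\ forall k (a b : A), phik k (a + b) = phik k a + phik k b,
      forall k (c : F) (a : A), phik k (c *: a) = c *: phik k a,
      forall a : A, exists N, forall k, (N <= k)%N -> phik k a = 0 &
      forall n (a b : A),
        phik n (amul a b) =
          \sum_(i < n.+1) amul (phik i a) (phik (n - i)%N b)].

Definition unit_preserving (F : fieldType) (A C : ualgebra F)
    (phik : nat -> A -> C) : Prop :=
  phik 0%N (aone A) = aone C /\ forall k, (0 < k)%N -> phik k (aone A) = 0.

Definition const_image (F : fieldType) (A C : algebra F)
    (phik : nat -> A -> C) (a : A) : Prop :=
  forall k, (0 < k)%N -> phik k a = 0.

Definition Pc (F : fieldType) (A : algebra F) (a : A) : Prop :=
  forall (C : algebra F) (phik : nat -> A -> C),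
    commutative_alg C -> poly_morphism phik -> const_image phik a.

Definition Pcr (F : fieldType) (A : algebra F) (a : A) : Prop :=
  forall (C : algebra F) (phik : nat -> A -> C),
    commutative_alg C -> reduced_alg C ->
    poly_morphism phik -> const_image phik a.

Definition Pcu (F : fieldType) (A : ualgebra F) (a : A) : Prop :=
  forall (C : ualgebra F) (phik : nat -> A -> C),
    commutative_alg C -> poly_morphism phik -> unit_preserving phik ->
    const_image phik a.

Definition Pcur (F : fieldType) (A : ualgebra F) (a : A) : Prop :=
  forall (C : ualgebra F) (phik : nat -> A -> C),
    commutative_alg C -> reduced_alg C ->
    poly_morphism phik -> unit_preserving phik ->
    const_image phik a.

(* Unit-preserving maps are a special case, so only P^cu ⊆ P^c (and P^cur ⊆ P^cr)
   needs an argument.  Let phi : A -> C[x] be any morphism into a commutative C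
   and e := phi(1)_0.  Comparing coefficients in phi(1) = phi(1) phi(1) shows that
   e is idempotent and that phi(1) = e is constant; then phi(a) = e phi(a), so phi
   takes values in the corner eC.  This is a commutative unital algebra with unit
   e, reduced when C is, and phi : A -> (eC)[x] is unit-preserving, so every
   element of P^cu (resp. P^cur) is sent to a constant. *)

From HB Require Import structures.
From mathcomp Require Import all_boot all_order all_algebra.
Set Implicit Arguments. Unset Strict Implicit. Unset Printing Implicit Defensive.
Import GRing.Theory.
Local Open Scope ring_scope.

Section AlgebraTheory.
Variables (F : fieldType) (C : algebra F).

Lemma amul0r (x : C) : amul x 0 = 0.
Proof. by have := amulZr 0 x 0; rewrite !scale0r. Qed.

Lemma amul0l (x : C) : amul 0 x = 0.
Proof. by have := amulZl 0 0 x; rewrite !scale0r. Qed.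

End AlgebraTheory.

Section Corner.
Variables (F : fieldType) (C : algebra F) (e : C).

Definition left_fixed : {pred C} := [pred x | amul e x == x].

Lemma left_fixed_subsemimod_closed : subsemimod_closed left_fixed.
Proof.
split; first split.
- by rewrite inE amul0r.
- by move=> x y /eqP ex /eqP ey; rewrite inE amulDr ex ey.
- by move=> k x /eqP ex; rewrite inE amulZr ex.
Qed.

HB.instance Definition _ :=
  GRing.isSubmodClosed.Build F C left_fixed left_fixed_subsemimod_closed.

Lemma left_fixed_mulr x y : x \in left_fixed -> amul x y \in left_fixed.
Proof. by move=> /eqP ex; rewrite inE amulA ex. Qed.

Record corner := Corner { corner_val : C; _ : corner_val \in left_fixed }.

HB.instance Definition _ := [isSub for corner_val].
HB.instance Definition _ := [Choice of corner by <:].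
HB.instance Definition _ := [SubChoice_isSubLmodule of corner by <:].

Definition corner_mul (x y : corner) : corner :=
  Corner (left_fixed_mulr (val y) (valP x)).

Lemma corner_mulA x y z :
  corner_mul x (corner_mul y z) = corner_mul (corner_mul x y) z.
Proof. by apply: val_inj; rewrite /= amulA. Qed.

Lemma corner_mulDl x y z :
  corner_mul (x + y) z = corner_mul x z + corner_mul y z.
Proof. by apply: val_inj; rewrite /= amulDl. Qed.

Lemma corner_mulDr x y z :
  corner_mul x (y + z) = corner_mul x y + corner_mul x z.
Proof. by apply: val_inj; rewrite /= amulDr. Qed.

Lemma corner_mulZl k x y : corner_mul (k *: x) y = k *: corner_mul x y.
Proof. by apply: val_inj; rewrite /= amulZl. Qed.

Lemma corner_mulZr k x y : corner_mul x (k *: y) = k *: corner_mul x y.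
Proof. by apply: val_inj; rewrite /= amulZr. Qed.

Definition corner_algebra : algebra F :=
  Algebra corner_mulA corner_mulDl corner_mulDr corner_mulZl corner_mulZr.

Lemma corner_commutative :
  commutative_alg C -> commutative_alg corner_algebra.
Proof. by move=> Ccomm x y; apply: val_inj; rewrite /= Ccomm. Qed.

Lemma val_corner_apow (x : corner_algebra) n :
  val (apow x n) = apow (val x) n.
Proof. by elim: n => //= n IHn; rewrite IHn. Qed.

Lemma corner_reduced : reduced_alg C -> reduced_alg corner_algebra.
Proof.
move=> Cred x n xn0; apply: val_inj; apply: (Cred _ n).
by rewrite -val_corner_apow xn0.
Qed.

Hypotheses (Ccomm : commutative_alg C) (e_idem : amul e e = e).

Lemma left_fixed_idem : e \in left_fixed.
Proof. by rewrite inE e_idem. Qed.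

Definition corner_one : corner_algebra := Corner left_fixed_idem.

Lemma corner_mul1l x : amul corner_one x = x.
Proof. by apply: val_inj; apply/eqP; apply: (valP x). Qed.

Lemma corner_mul1r x : amul x corner_one = x.
Proof. by rewrite corner_commutative // corner_mul1l. Qed.

Definition corner_ualgebra : ualgebra F := UAlgebra corner_mul1l corner_mul1r.

End Corner.

Section PolyMorphismOfUnital.
Variables (F : fieldType) (A : ualgebra F) (C : algebra F).
Variable phik : nat -> A -> C.
Hypotheses (Ccomm : commutative_alg C) (phi_morph : poly_morphism phik).

Local Notation e := (phik 0 (aone A)).

Lemma poly_morphism_coef_mul1l n b :
  phik n b = \sum_(i < n.+1) amul (phik i (aone A)) (phik (n - i) b).
Proof. by case: phi_morph => _ _ _ phiM; rewrite -phiM amul1l. Qed.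

Lemma poly_morphism_unit0_idem : amul e e = e.
Proof. by rewrite {3}poly_morphism_coef_mul1l big_ord1. Qed.

Lemma poly_morphism_unit_const n : (0 < n)%N -> phik n (aone A) = 0.
Proof.
(* Once the lower coefficients vanish, degree n of 1 = 1 * 1 reads c = 2 e c
   for c := phi(1)_n; multiplying by the idempotent e gives e c = 2 e c,
   so e c = 0. *)
elim/ltn_ind: n => -[//|m] IHm _.
set n := m.+1.
have twice : phik n (aone A) = amul e (phik n (aone A)) *+ 2.
  rewrite {1}poly_morphism_coef_mul1l big_ord_recl big_ord_recr /= big1.
    by rewrite add0r subn0 subnn [amul _ e]Ccomm.
  by move=> i _; rewrite IHm ?amul0l // ltnS.
have : amul e (phik n (aone A)) = amul e (phik n (aone A)) *+ 2.
  by rewrite {1}twice mulr2n amulDr amulA poly_morphism_unit0_idem -mulr2n.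
rewrite mulr2n -[X in X = _]addr0 => /addrI ex0.
by rewrite twice -ex0 mul0rn.
Qed.

Lemma poly_morphism_left_fixed k a : phik k a \in left_fixed e.
Proof.
rewrite inE; apply/eqP.
rewrite [RHS]poly_morphism_coef_mul1l big_ord_recl big1 ?addr0 ?subn0 //.
by move=> i _; rewrite poly_morphism_unit_const ?amul0l.
Qed.

Definition corner_corestr k a : corner_ualgebra Ccomm poly_morphism_unit0_idem :=
  Corner (poly_morphism_left_fixed k a).

Lemma corner_corestr_morph : poly_morphism corner_corestr.
Proof.
case: phi_morph => phiD phiZ phi_fin phiM; split.
- by move=> k a b; apply: val_inj; rewrite /= phiD.
- by move=> k x a; apply: val_inj; rewrite /= phiZ.
- move=> a; have [N phiN] := phi_fin a; exists N => k kN.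
  by apply: val_inj; rewrite /= phiN.
- by move=> n a b; apply: val_inj; rewrite raddf_sum; apply: phiM.
Qed.

Lemma corner_corestr_unit : unit_preserving corner_corestr.
Proof.
split=> [|k k_gt0]; apply: val_inj => //=.
exact: poly_morphism_unit_const.
Qed.

Lemma const_image_corner_corestr a :
  const_image corner_corestr a -> const_image phik a.
Proof.
by move=> psi_const k k_gt0; rewrite -[LHS]/(val (corner_corestr k a)) psi_const.
Qed.

End PolyMorphismOfUnital.

Section UnitalPolynomialConstants.
Variables (F : fieldType) (A : ualgebra F).

Lemma Pcu_Pc (a : A) : Pcu a -> Pc a.
Proof.
move=> aPcu C phik Ccomm phi_morph; apply: const_image_corner_corestr.
apply: aPcu.
- exact: corner_commutative.
- exact: corner_corestr_morph.
- exact: corner_corestr_unit.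
Qed.

Lemma Pcur_Pcr (a : A) : Pcur a -> Pcr a.
Proof.
move=> aPcur C phik Ccomm Cred phi_morph; apply: const_image_corner_corestr.
apply: aPcur.
- exact: corner_commutative.
- exact: corner_reduced.
- exact: corner_corestr_morph.
- exact: corner_corestr_unit.
Qed.

End UnitalPolynomialConstants.

Theorem mainTheorem10 (F : fieldType) (A : ualgebra F) :
  (forall a : A, @Pc F (ualg A) a <-> Pcu a) /\
  (forall a : A, @Pcr F (ualg A) a <-> Pcur a).
Proof.
split=> a; split; [|exact: Pcu_Pc| |exact: Pcur_Pcr].
- by move=> aPc C phik Ccomm phi_morph _; exact: aPc.
- by move=> aPcr C phik Ccomm Cred phi_morph _; exact: aPcr.
Qed.
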